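(* Let $(X,d^\star)$ be a complete $\star$-metric space and let $A_1,A_2,\dots$ be a sequence of dense open subsets of $X$. Then $\bigcap_{n=1}^\infty A_n$ is dense in $X$.
   Context: A $t$-definer is a function $\star:[0,\infty)\times[0,\infty)\to[0,\infty)$ such that for all $a,b,c\ge 0$: $a\star b=b\star a$; $a\star(b\star c)=(a\star b)\star c$; if $a\le b$ then $a\star c\le b\star c$; $a\star 0=a$; and $\star$ is continuous in its first variable with respect to the Euclidean topology. Given a nonempty set $X$ and a $t$-definer $\star$, a $\star$-metric on $X$ is a function $d^\star:X\times X\to[0,\infty)$ such that for all $x,y,z\in X$: $d^\star(x,y)=0$ iff $x=y$; $d^\star(x,y)=d^\star(y,x)$; and $d^\star(x,y)\le d^\star(x,z)\star d^\star(z,y)$. Topological notions refer to the topology consisting of all $U\subseteq X$ such that for each $a\in U$ there is $r>0$ with $\{x: d^\star(a,x)<r\}\subseteq U$. A sequence $\{x_n\}$ is Cauchy if for every $\epsilon>0$ there is $k$ with $d^\star(x_n,x_m)<\epsilon$ for all $m,n\ge k$; it converges to $x$ if for every $\epsilon>0$ there is $k$ with $d^\star(x,x_n)<\epsilon$ for $n\ge k$. $(X,d^\star)$ is complete if every Cauchy sequence converges to a point of $X$. *)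

From Stdlib Require Import Reals.
Open Scope R_scope.

(* A t-definer on [0,oo): represented as a function R -> R -> R whose
   axioms are required only on nonnegative arguments. *)
Definition t_definer (star : R -> R -> R) : Prop :=
  (forall a b, 0 <= a -> 0 <= b -> 0 <= star a b) /\
  (forall a b, 0 <= a -> 0 <= b -> star a b = star b a) /\
  (forall a b c, 0 <= a -> 0 <= b -> 0 <= c ->
      star a (star b c) = star (star a b) c) /\
  (forall a b c, 0 <= a -> 0 <= b -> 0 <= c -> a <= b -> star a c <= star b c) /\
  (forall a, 0 <= a -> star a 0 = a) /\
  (forall b a, 0 <= b -> 0 <= a ->
     forall eps, 0 < eps -> exists delta, 0 < delta /\
       forall x, 0 <= x -> Rabs (x - a) < delta ->
         Rabs (star x b - star a b) < eps).

Definition star_metric {X : Type} (star : R -> R -> R) (d : X -> X -> R) : Prop :=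
  (forall x y, 0 <= d x y) /\
  (forall x y, d x y = 0 <-> x = y) /\
  (forall x y, d x y = d y x) /\
  (forall x y z, d x y <= star (d x z) (d z y)).

Definition sopen {X : Type} (d : X -> X -> R) (U : X -> Prop) : Prop :=
  forall a, U a -> exists r, 0 < r /\ forall x, d a x < r -> U x.

Definition sclosure {X : Type} (d : X -> X -> R) (A : X -> Prop) (x : X) : Prop :=
  forall U, sopen d U -> U x -> exists y, U y /\ A y.

Definition sdense {X : Type} (d : X -> X -> R) (A : X -> Prop) : Prop :=
  forall x, sclosure d A x.

Definition scauchy {X : Type} (d : X -> X -> R) (u : nat -> X) : Prop :=
  forall eps, 0 < eps -> exists k, forall m n, (k <= m)%nat -> (k <= n)%nat ->
    d (u n) (u m) < eps.

Definition sconverges {X : Type} (d : X -> X -> R) (u : nat -> X) (x : X) : Prop :=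
  forall eps, 0 < eps -> exists k, forall n, (k <= n)%nat -> d x (u n) < eps.

Definition scomplete {X : Type} (d : X -> X -> R) : Prop :=
  forall u, scauchy d u -> exists x, sconverges d u x.

(* Baire's argument goes through once one knows that small [star]-steps cost
   little: continuity of [star] at [(r, 0)] makes open balls open, and
   [star t t -> 0] as [t -> 0] makes the centres of a nested sequence of balls
   with radii tending to 0 a Cauchy sequence.  Inside any open set one then
   chooses balls B(u_n, r_n) whose doubles B(u_n, 2 r_n) lie in A_n and in the
   previous ball; the limit of the centres lies in every such double. *)

From Stdlib Require Import Reals Lra Lia ClassicalEpsilon.
Open Scope R_scope.

Section TDefiner.

Variable star : R -> R -> R.
Hypothesis Hstar : t_definer star.

Lemma star_comm a b : 0 <= a -> 0 <= b -> star a b = star b a.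
Proof. destruct Hstar as (_ & H & _). apply H. Qed.

Lemma star_le_l a b c : 0 <= a -> 0 <= b -> 0 <= c -> a <= b -> star a c <= star b c.
Proof. destruct Hstar as (_ & _ & _ & H & _). apply H. Qed.

Lemma star_le_r a b c : 0 <= a -> 0 <= b -> 0 <= c -> b <= c -> star a b <= star a c.
Proof.
  intros. rewrite (star_comm a b), (star_comm a c) by lra. apply star_le_l; lra.
Qed.

Lemma star_0l a : 0 <= a -> star 0 a = a.
Proof.
  intros Ha. destruct Hstar as (_ & _ & _ & _ & H & _).
  rewrite star_comm by lra. apply H; lra.
Qed.

Lemma star_small_r r eps : 0 <= r -> 0 < eps ->
  exists del, 0 < del /\ forall e, 0 <= e -> e < del -> star r e < r + eps.
Proof.
  intros Hr Heps. destruct Hstar as (_ & _ & _ & _ & _ & Hcont).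
  destruct (Hcont r 0 Hr (Rle_refl 0) eps Heps) as [del [Hdel Hclose]].
  exists del; split; [exact Hdel |]. intros e He Hed.
  assert (Hee : Rabs (e - 0) < del) by (rewrite Rminus_0_r, Rabs_right; lra).
  specialize (Hclose e He Hee). rewrite star_0l in Hclose by lra.
  rewrite star_comm by lra. apply Rabs_def2 in Hclose. lra.
Qed.

Lemma star_diag_small eps : 0 < eps ->
  exists del, 0 < del /\ forall t, 0 <= t -> t < del -> star t t < eps.
Proof.
  intros Heps. destruct (star_small_r (eps / 2) (eps / 2)) as [del [Hdel Hsmall]]; try lra.
  exists (Rmin del (eps / 2)). split; [apply Rmin_glb_lt; lra |].
  intros t Ht Htd.
  pose proof (Rmin_l del (eps / 2)). pose proof (Rmin_r del (eps / 2)).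
  assert (Hle : star t t <= star t (eps / 2)) by (apply star_le_r; lra).
  specialize (Hsmall t Ht ltac:(lra)). rewrite star_comm in Hsmall by lra. lra.
Qed.

End TDefiner.

Lemma dependent_choice_nat {T : Type} (P : T -> Prop) (Rel : nat -> T -> T -> Prop) (p0 : T) :
  P p0 -> (forall n p, P p -> exists q, P q /\ Rel n p q) ->
  exists g : nat -> T, g 0%nat = p0 /\ forall n, P (g n) /\ Rel n (g n) (g (S n)).
Proof.
  intros H0 Hstep.
  assert (next : forall n (p : {p | P p}), {q | P q /\ Rel n (proj1_sig p) q}).
  { intros n [p Hp]. apply constructive_indefinite_description, Hstep, Hp. }
  pose (gs := nat_rect (fun _ => {p | P p}) (exist P p0 H0)
                (fun n p => let (q, Hq) := next n p in exist P q (proj1 Hq))).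
  exists (fun n => proj1_sig (gs n)). split; [reflexivity |].
  intros n. split; [exact (proj2_sig (gs n)) |].
  simpl. destruct (next n (gs n)) as [q Hq]. exact (proj2 Hq).
Qed.

Section StarMetric.

Variables (X : Type) (star : R -> R -> R) (d : X -> X -> R).
Hypothesis Hstar : t_definer star.
Hypothesis Hd : star_metric star d.

Lemma dist_ge0 x y : 0 <= d x y.
Proof. destruct Hd as (H & _). apply H. Qed.

Lemma dist_xx x : d x x = 0.
Proof. destruct Hd as (_ & H & _). apply H. reflexivity. Qed.

Lemma dist_sym x y : d x y = d y x.
Proof. destruct Hd as (_ & _ & H & _). apply H. Qed.

Lemma dist_triangle x y z : d x y <= star (d x z) (d z y).
Proof. destruct Hd as (_ & _ & _ & H). apply H. Qed.

Lemma ball_nbhs y s x : d y x < s ->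
  exists rho, 0 < rho /\ forall w, d x w < rho -> d y w < s.
Proof.
  intros Hyx.
  destruct (star_small_r star Hstar (d y x) (s - d y x)) as [del [Hdel Hsmall]];
    [apply dist_ge0 | lra |].
  exists del; split; [exact Hdel |]. intros w Hw.
  pose proof (dist_triangle y w x). specialize (Hsmall (d x w) (dist_ge0 x w) Hw). lra.
Qed.

Lemma ball_open y s : sopen d (fun w => d y w < s).
Proof. intros x Hx. exact (ball_nbhs y s x Hx). Qed.

Lemma dense_open_refine_ball (V : X -> Prop) y s eps :
  sopen d V -> sdense d V -> 0 < s -> 0 < eps ->
  exists z rho, 0 < rho /\ rho <= eps /\
    forall w, d z w < 2 * rho -> V w /\ d y w < s.
Proof.
  intros HVo HVd Hs Heps.
  destruct (HVd y (fun w => d y w < s) (ball_open y s)) as [z [Hyz HVz]];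
    [rewrite dist_xx; lra |].
  destruct (HVo z HVz) as [r1 [Hr1 HV]].
  destruct (ball_nbhs y s z Hyz) as [r2 [Hr2 Hball]].
  exists z, (Rmin (Rmin r1 r2 / 2) eps).
  pose proof (Rmin_l (Rmin r1 r2 / 2) eps). pose proof (Rmin_r (Rmin r1 r2 / 2) eps).
  pose proof (Rmin_l r1 r2). pose proof (Rmin_r r1 r2).
  assert (0 < Rmin r1 r2) by (apply Rmin_glb_lt; lra).
  split; [apply Rmin_glb_lt; lra |]. split; [lra |].
  intros w Hw. split; [apply HV | apply Hball]; lra.
Qed.

Section NestedBalls.

Variables (u : nat -> X) (r : nat -> R).
Hypothesis r_pos : forall n, 0 < r n.
Hypothesis balls_nested :
  forall n w, d (u (S n)) w < 2 * r (S n) -> d (u n) w < r n.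

Lemma nested_balls_sub k j w : d (u (k + j)%nat) w < r (k + j)%nat -> d (u k) w < r k.
Proof.
  revert k. induction j as [| j IHj]; intros k Hw.
  - rewrite Nat.add_0_r in Hw. exact Hw.
  - apply IHj, balls_nested. rewrite <- Nat.add_succ_r. pose proof (r_pos (k + S j)). lra.
Qed.

Lemma nested_centres_dist k m : (k <= m)%nat -> d (u k) (u m) < r k.
Proof.
  intros Hkm. replace m with (k + (m - k))%nat by lia.
  apply (nested_balls_sub k (m - k)). rewrite dist_xx. apply r_pos.
Qed.

Lemma nested_centres_cauchy :
  (forall eps, 0 < eps -> exists k, r k < eps) -> scauchy d u.
Proof.
  intros Hr0 eps Heps.
  destruct (star_diag_small star Hstar eps Heps) as [del [Hdel Hsmall]].
  destruct (Hr0 del Hdel) as [k Hk]. exists k. intros m n Hm Hn.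
  pose proof (nested_centres_dist k n Hn). pose proof (nested_centres_dist k m Hm).
  pose proof (r_pos k). pose proof (dist_ge0 (u k) (u n)). pose proof (dist_ge0 (u k) (u m)).
  assert (Htri : d (u n) (u m) <= star (d (u k) (u n)) (d (u k) (u m))).
  { rewrite (dist_sym (u k) (u n)). apply dist_triangle. }
  assert (star (d (u k) (u n)) (d (u k) (u m)) <= star (r k) (d (u k) (u m)))
    by (apply (star_le_l star Hstar); lra).
  assert (star (r k) (d (u k) (u m)) <= star (r k) (r k)) by (apply (star_le_r star Hstar); lra).
  specialize (Hsmall (r k) ltac:(lra) Hk). lra.
Qed.

Lemma nested_limit_in_double_balls x : sconverges d u x -> forall k, d (u k) x < 2 * r k.
Proof.
  intros Hx k. pose proof (r_pos k).
  destruct (star_small_r star Hstar (r k) (r k)) as [del [Hdel Hsmall]]; try lra.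
  destruct (Hx del Hdel) as [m Hm].
  set (n := Nat.max k m).
  specialize (Hm n (Nat.le_max_r k m)).
  pose proof (nested_centres_dist k n (Nat.le_max_l k m)).
  pose proof (dist_triangle (u k) x (u n)). rewrite (dist_sym (u n) x) in H1.
  specialize (Hsmall _ (dist_ge0 x (u n)) Hm).
  assert (star (d (u k) (u n)) (d x (u n)) <= star (r k) (d x (u n)))
    by (apply (star_le_l star Hstar); try apply dist_ge0; lra).
  lra.
Qed.

End NestedBalls.

End StarMetric.

Theorem theorem4p14 (X : Type) (x0 : X) (star : R -> R -> R) (d : X -> X -> R)
  (Hstar : t_definer star) (Hd : star_metric star d) (Hc : scomplete d)
  (A : nat -> X -> Prop)
  (HAo : forall n, sopen d (A n)) (HAd : forall n, sdense d (A n)) :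
  sdense d (fun x => forall n, A n x).
Proof.
  intros c U HU HUc. destruct (HU c HUc) as [r0 [Hr0 HUr0]].
  pose (refines n (p q : X * R) := snd q <= / INR (S n) /\
          forall w, d (fst q) w < 2 * snd q -> A n w /\ d (fst p) w < snd p).
  assert (Hrefine : forall n p, 0 < snd p -> exists q, 0 < snd q /\ refines n p q).
  { intros n [y s] Hs.
    assert (Hn : 0 < / INR (S n)) by (apply Rinv_0_lt_compat, lt_0_INR; lia).
    destruct (dense_open_refine_ball X star d Hstar Hd (A n) y s (/ INR (S n))
                (HAo n) (HAd n) Hs Hn) as [z [rho [Hrho [Hle Hsub]]]].
    exists (z, rho). exact (conj Hrho (conj Hle Hsub)). }
  destruct (dependent_choice_nat (fun p => 0 < snd p) refines (c, r0) Hr0 Hrefine)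
    as [g [Hg0 Hg]].
  pose (u n := fst (g n)). pose (r n := snd (g n)).
  assert (Hnest : forall n w, d (u (S n)) w < 2 * r (S n) -> d (u n) w < r n)
    by (intros n w; apply Hg).
  assert (Hr_pos : forall n, 0 < r n) by apply Hg.
  assert (Hr_lim : forall eps, 0 < eps -> exists k, r k < eps).
  { intros eps Heps. destruct (archimed_cor1 eps Heps) as [N [HN HN0]].
    exists N. destruct N as [| n]; [lia |]. pose proof (proj1 (proj2 (Hg n))). unfold r; lra. }
  destruct (Hc u (nested_centres_cauchy X star d Hstar Hd u r Hr_pos Hnest Hr_lim)) as [x Hx].
  pose proof (nested_limit_in_double_balls X star d Hstar Hd u r Hr_pos Hnest x Hx) as Hlim.
  exists x. split.
  - apply HUr0. replace c with (u 0%nat) by (unfold u; rewrite Hg0; reflexivity).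
    replace r0 with (r 0%nat) by (unfold r; rewrite Hg0; reflexivity). apply Hnest, Hlim.
  - intro n. apply (proj2 (proj2 (Hg n))), Hlim.
Qed.
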